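(* Let $\lambda=(\lambda_1,\dots,\lambda_d)$ be a partition of $n\ge2$. For distinct $i,j\in\{0,\dots,n-2\}$, we have $i\preceq j$ in $P(\lambda)$ if and only if $i<j$ and for each $t\in\{1,\dots,d\}$ one of the following holds: (1) $s_{t,i}>s_{t,j}>0$; (2) $s_{t,i}=0$ and $s_{t,j}=s_{t,j-i}$; (3) $s_{t,j}=s_{t,i}>0$ and $s_{t,j-i}=0$.
   Context: $\Delta_\lambda=\mathrm{conv}(e_1,\dots,e_d,\lambda)\subset\mathbb{R}^d$, with fundamental parallelepiped $\Pi_\lambda=\{\sum_{i=1}^d\gamma_i(1,e_i)+\gamma_{d+1}(1,\lambda):0\le\gamma_i<1\}\subset\mathbb{R}^{d+1}$. $P(\lambda)$ is $\Pi_\lambda\cap\mathbb{Z}^{d+1}$ ordered by $\sigma\preceq\mu$ iff $\mu-\sigma\in\Pi_\lambda\cap\mathbb{Z}^{d+1}$. For $0\le b<n-1$ set $p(b)=\left(\sum_{t}\lceil b\lambda_t/(n-1)\rceil-b,\ \lceil b\lambda_1/(n-1)\rceil,\dots,\lceil b\lambda_d/(n-1)\rceil\right)$; $b\mapsto p(b)$ is a bijection from $\{0,\dots,n-2\}$ onto $\Pi_\lambda\cap\mathbb{Z}^{d+1}$ and each integer $b$ is identified with $p(b)$. For $0\le i<n-1$ and $1\le t\le d$, the integers $r_{t,i}\ge0$ and $0\le s_{t,i}<n-1$ are defined by $i\lambda_t=r_{t,i}(n-1)+s_{t,i}$. *)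

From HB Require Import structures.
From mathcomp Require Import all_boot all_order all_algebra.
Unset Printing Implicit Defensive.
Import Order.TTheory GRing.Theory Num.Theory.

(* lambda is a partition of n: a weakly decreasing sequence of positive
   integers summing to n; d = size lam, lambda_t = nth 0 lam t (0-indexed). *)
Definition is_partition (n : nat) (lam : seq nat) : Prop :=
  [/\ sorted geq lam, all (fun x => 0 < x) lam & sumn lam = n].

Definition ceil_div (a m : nat) : nat := (a + m.-1) %/ m.

(* p(b) = (sum_t ceil(b lam_t/(n-1)) - b, ceil(b lam_1/(n-1)), ..., ceil(b lam_d/(n-1)))
   as a pair (first coordinate, remaining d coordinates) in Z x Z^d. *)
Definition p0 (n : nat) (lam : seq nat) (b : nat) : int :=
  (\sum_(t < size lam) ceil_div (b * nth 0 lam t) n.-1)%:Z - b%:Z.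
Definition p1 (n : nat) (lam : seq nat) (b : nat) (t : 'I_(size lam)) : int :=
  (ceil_div (b * nth 0 lam t) n.-1)%:Z.

(* Membership of (x0, x) in Z^{d+1} in the fundamental parallelepiped
   Pi_lam = { sum_i g_i (1, e_i) + g_{d+1} (1, lam) : 0 <= g_i < 1 }
   (coefficients g taken in the ordered field R; the index ord_max of
   'I_(d.+1) plays the role of d+1). *)
Definition in_Pi (R : realFieldType) (lam : seq nat) (x0 : int)
    (x : 'I_(size lam) -> int) : Prop :=
  exists g : 'I_(size lam).+1 -> R,
    (forall k, 0 <= g k /\ g k < 1)%R /\
    (x0%:~R = \sum_(k < (size lam).+1) g k)%R /\
    (forall t : 'I_(size lam),
        (x t)%:~R = g (widen_ord (leqnSn _) t) + g ord_max * (nth 0 lam t)%:R)%R.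

(* i <= j in P(lambda), identifying b with p(b): p(j) - p(i) in Pi_lam cap Z^{d+1} *)
Definition preceq (R : realFieldType) (n : nat) (lam : seq nat) (i j : nat) : Prop :=
  in_Pi R lam (p0 n lam j - p0 n lam i)%R (fun t => p1 n lam j t - p1 n lam i t)%R.

Definition s_ (n : nat) (lam : seq nat) (t : nat) (i : nat) : nat :=
  (i * nth 0 lam t) %% n.-1.

(* Since sum lam = n <> 1, a lattice point x of Pi_lam determines its coefficients:
   gamma_(d+1) = (sum_t x_t - x_0) / (n - 1) and gamma_t = x_t - gamma_(d+1) lam_t.
   For x = p(j) - p(i) this gives gamma_(d+1) = (j - i) / (n - 1), which lies in [0, 1)
   iff i <= j, and, writing ceil(A / N) N = A + g(A) with 0 <= g(A) < N and N = n - 1,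
   gamma_t = (g(j lam_t) - g(i lam_t)) / N, which lies in [0, 1) iff
   g(i lam_t) <= g(j lam_t).  As g(A) = N - (A mod N) for A mod N > 0 and g(A) = 0
   otherwise, this reads s_(t,i) = 0 or 0 < s_(t,j) <= s_(t,i), a repackaging of the
   three cases of the theorem. *)

From HB Require Import structures.
From mathcomp Require Import all_boot all_order all_algebra.
From mathcomp Require Import zify ring lra.
Import Order.TTheory GRing.Theory Num.Theory.

Set Implicit Arguments.
Unset Strict Implicit.

Lemma sumn_nth (s : seq nat) : \sum_(t < size s) nth 0 s t = sumn s.
Proof. by rewrite sumnE (big_nth 0) big_mkord. Qed.

Section CeilGap.

Variable N : nat.
Hypothesis N_gt0 : 0 < N.

Definition ceil_gap (A : nat) : nat := (N - A %% N) %% N.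

Lemma ceil_gap_lt A : ceil_gap A < N.
Proof. exact: ltn_pmod. Qed.

Lemma ceil_divK A : ceil_div A N * N = A + ceil_gap A.
Proof.
rewrite /ceil_div /ceil_gap (divn_eq A N) modnMDl modn_mod -!addnA divnMDl //.
rewrite mulnDl; have : A %% N < N by exact: ltn_pmod.
move: (A %% N) => r r_lt; congr (_ + _).
case: (posnP r) => [-> | r_gt0]; first by rewrite subn0 modnn divn_small ?prednK.
have -> : r + N.-1 = 1 * N + r.-1 by lia.
rewrite divnMDl // divn_small ?modn_small; lia.
Qed.

Lemma leq_ceil_gap A B :
  (ceil_gap B <= ceil_gap A) = (B %% N == 0) || (0 < A %% N <= B %% N).
Proof.
rewrite /ceil_gap; have := ltn_pmod A N_gt0; have := ltn_pmod B N_gt0.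
move: (A %% N) (B %% N) => a b b_lt a_lt.
case: (posnP a) => [-> | a_gt0]; case: (posnP b) => [-> | b_gt0];
  rewrite ?subn0 ?modnn ?modn_small; lia.
Qed.

End CeilGap.

Lemma residue_cases N A B : B <= A ->
  (A %% N < B %% N /\ 0 < A %% N)
  \/ (B %% N = 0 /\ A %% N = (A - B) %% N)
  \/ (A %% N = B %% N /\ 0 < A %% N /\ (A - B) %% N = 0)
  <-> (B %% N == 0) || (0 < A %% N <= B %% N).
Proof.
move=> le_BA; split.
- case=> [[lt_AB sA_gt0] | [[-> _] | [eq_AB [sA_gt0 _]]]] //.
  + by rewrite sA_gt0 ltnW ?orbT.
  + by rewrite sA_gt0 eq_AB leqnn orbT.
- case/orP=> [/eqP sB0 | /andP[sA_gt0]].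
    by right; left; split=> //; rewrite -[A in LHS](subnK le_BA) -modnDmr sB0 addn0.
  rewrite leq_eqVlt => /orP[/eqP eq_AB | lt_AB]; last by left.
  right; right; split=> //; split=> //.
  by apply/eqP; rewrite -/(dvdn N (A - B)) -eqn_mod_dvd // eq_AB.
Qed.

Section Parallelepiped.

Variable R : realFieldType.
Local Open Scope ring_scope.

Lemma ceil_div_sub_frac N A B : (0 < N)%N ->
  ((0 : R) <= (ceil_div A N)%:R - (ceil_div B N)%:R - (A%:R - B%:R) / N%:R < (1 : R))
  = (ceil_gap N B <= ceil_gap N A)%N.
Proof.
move=> N_gt0.
have N_gt0' : 0 < N%:R :> R by rewrite ltr0n.
have ceilE C : (ceil_div C N)%:R = (C%:R + (ceil_gap N C)%:R) / N%:R :> R.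
  by rewrite -natrD -(ceil_divK N_gt0) natrM mulfK ?lt0r_neq0.
have -> : (ceil_div A N)%:R - (ceil_div B N)%:R - (A%:R - B%:R) / N%:R
          = ((ceil_gap N A)%:R - (ceil_gap N B)%:R) / N%:R :> R.
  by rewrite !ceilE; field; rewrite lt0r_neq0.
rewrite ler_pdivlMr // mul0r ltr_pdivrMr // mul1r subr_ge0 ler_nat.
apply: andb_idr => _; have := ceil_gap_lt N_gt0 A; rewrite -(ltr_nat R) => gapA_lt.
have : 0 <= (ceil_gap N B)%:R :> R by rewrite ler0n.
lra.
Qed.

Definition Pi_last_coef (lam : seq nat) (x0 : int) (x : 'I_(size lam) -> int) : R :=
  (\sum_t x t - x0)%:~R / (sumn lam).-1%:R.

Lemma in_PiE lam x0 x : (1 < sumn lam)%N ->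
  in_Pi R lam x0 x <->
  (0 <= Pi_last_coef x0 x < 1) /\
  forall t, 0 <= (x t)%:~R - Pi_last_coef x0 x * (nth 0%N lam t)%:R < 1.
Proof.
move=> S_gt1; set gam := Pi_last_coef x0 x.
have S1_gt0 : 0 < (sumn lam).-1%:R :> R by rewrite ltr0n; lia.
have sum_lam : \sum_(t < size lam) (nth 0%N lam t)%:R = (sumn lam).-1%:R + 1 :> R.
  by rewrite -natr_sum sumn_nth natr1 prednK //; lia.
have gamK : gam * (sumn lam).-1%:R = \sum_t (x t)%:~R - x0%:~R.
  by rewrite mulfVK ?lt0r_neq0 // intrB rmorph_sum.
split.
- case=> g [g01 [x0E xE]].
  have gamE : gam = g ord_max.
    apply: (mulIf (lt0r_neq0 S1_gt0)); rewrite gamK x0E big_ord_recr /=.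
    rewrite (eq_bigr _ (fun t _ => xE t)) big_split /= -mulr_sumr sum_lam.
    ring.
  rewrite gamE; split; first by apply/andP; exact: g01.
  by move=> t; rewrite xE addrK; apply/andP; exact: g01.
- case=> /andP gam01 x01.
  exists (fun k => if insub (val k) is Some t then (x t)%:~R - gam * (nth 0%N lam t)%:R else gam).
  split; [|split].
  + by move=> k; case: insubP => [t _ _ | _] //; apply/andP; exact: x01.
  + rewrite big_ord_recr /= insubF ?ltnn //.
    rewrite (eq_bigr (fun t => (x t)%:~R - gam * (nth 0%N lam t)%:R)); last first.
      by move=> t _; rewrite valK.
    rewrite sumrB -mulr_sumr sum_lam; lra.
  + by move=> t /=; rewrite valK insubF ?ltnn // subrK.
Qed.

End Parallelepiped.

Lemma preceqE (R : realFieldType) n lam i j :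
  2 <= n -> sumn lam = n -> j < n.-1 ->
  preceq R n lam i j <->
  i <= j /\ forall t : 'I_(size lam),
    ceil_gap n.-1 (i * nth 0 lam t) <= ceil_gap n.-1 (j * nth 0 lam t).
Proof.
move=> n_ge2 sum_n j_lt; rewrite /preceq in_PiE ?sum_n //.
set N := n.-1 in j_lt *; have N_gt0 : 0 < N by rewrite /N; lia.
have N_gt0' : (0 < N%:R :> R)%R by rewrite ltr0n.
set x0 := (_ - _)%R; set x := fun t => _.
have gamE : Pi_last_coef R x0 x = ((j%:R - i%:R) / N%:R)%R.
  rewrite /Pi_last_coef sum_n /x0 /x /p0 /p1; congr (_ / _)%R.
  rewrite sumrB !intrB !sumMz !rmorph_sum /= -!pmulrn; lra.
have last_coef01 : (0 <= Pi_last_coef R x0 x < 1)%R = (i <= j).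
  rewrite gamE ler_pdivlMr // mul0r ltr_pdivrMr // mul1r subr_ge0 ler_nat.
  apply: andb_idr => _; have : (j%:R < N%:R :> R)%R by rewrite ltr_nat.
  have : (0 <= i%:R :> R)%R by rewrite ler0n.
  lra.
have coordE t : ((x t)%:~R - Pi_last_coef R x0 x * (nth 0 lam t)%:R
    = (ceil_div (j * nth 0 lam t) N)%:R - (ceil_div (i * nth 0 lam t) N)%:R
      - ((j * nth 0 lam t)%:R - (i * nth 0 lam t)%:R) / N%:R :> R)%R.
  by rewrite gamE /x /p1 intrB -!pmulrn !natrM; field; rewrite lt0r_neq0.
rewrite last_coef01; split=> -[le_ij H]; split=> // t; have := H t;
  by rewrite coordE ceil_div_sub_frac.
Qed.

Theorem theorem2p17 (R : realFieldType) (n : nat) (lam : seq nat) :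
  2 <= n -> is_partition n lam ->
  forall i j : nat, i < n.-1 -> j < n.-1 -> i != j ->
  (preceq R n lam i j <->
   (i < j /\
    forall t : 'I_(size lam),
      (s_ n lam t j < s_ n lam t i /\ 0 < s_ n lam t j)
      \/ (s_ n lam t i = 0 /\ s_ n lam t j = s_ n lam t (j - i))
      \/ (s_ n lam t j = s_ n lam t i /\ 0 < s_ n lam t j /\ s_ n lam t (j - i) = 0))).
Proof.
move=> n_ge2 [_ _ sum_n] i j _ j_lt neq_ij.
have N_gt0 : 0 < n.-1 by lia.
rewrite preceqE // ltn_neqAle neq_ij /=.
split=> -[le_ij H]; split=> // t;
  have le_ij_t := leq_mul le_ij (leqnn (nth 0 lam t)).
- rewrite /s_ mulnBl; apply/(residue_cases _ le_ij_t).
  by rewrite -leq_ceil_gap.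
- rewrite leq_ceil_gap //; apply/(residue_cases _ le_ij_t).
  by move: (H t); rewrite /s_ mulnBl.
Qed.
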